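(* Let $\tilde r\in(\tfrac14,\tfrac12)$, set $\mu=2\cos(2\pi\tilde r)$, and let $(\tilde x,\tilde y,\tilde z)\in\mathbb{C}^3$ be the trace coordinates of a representation in $\mathcal M^{\tilde r}_{0,4}$, so that $$\tilde x^2+\tilde y^2+\tilde z^2+\tilde x\tilde y\tilde z-2\mu^2(\tilde x+\tilde y+\tilde z)+4(\mu^2-1)+\mu^4=0,$$ and assume $(\tilde x-2)(\tilde y-2)(\tilde z-2)\neq0$. Then, with $r=2\tilde r-\tfrac12$, there exists $(x,y,z)\in\mathbb{C}^3$, unique up to signs, satisfying $x^2+y^2+z^2-xyz-2-2\cos(2\pi r)=0$ (i.e. the trace coordinates of an element of $\mathcal M^r_{1,1}$) and $$\tilde x=2-x^2,\quad \tilde y=2-y^2,\quad \tilde z=2-z^2.$$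
   Context: $\mathcal M^{\tilde r}_{0,4}$ is the space of conjugacy classes of representations $\pi_1(S_4,s_0)\to\mathrm{SL}(2,\mathbb{C})$ of the four-punctured sphere, generated by loops $\gamma_{p_1},\dots,\gamma_{p_4}$ around the punctures with $\gamma_{p_4}\gamma_{p_3}\gamma_{p_2}\gamma_{p_1}=1$, such that each $M_j=\rho(\gamma_{p_j})$ has trace $2\cos(2\pi\tilde r)$; its trace coordinates are $\tilde x=\mathrm{Tr}(M_2M_1)$, $\tilde y=\mathrm{Tr}(M_3M_2)$, $\tilde z=\mathrm{Tr}(M_3M_1)$. $\mathcal M^r_{1,1}$ is the space of conjugacy classes of representations of the free group $\pi_1(T^2\setminus\{o\})=\langle\gamma_x,\gamma_y\rangle$ of a once-punctured torus into $\mathrm{SL}(2,\mathbb{C})$ such that the image of the commutator $\gamma_y^{-1}\gamma_x^{-1}\gamma_y\gamma_x$ has trace $2\cos(2\pi r)$; its trace coordinates are $x=\mathrm{Tr}X$, $y=\mathrm{Tr}Y$, $z=\mathrm{Tr}(YX)$, with $X,Y$ the images of $\gamma_x,\gamma_y$. *)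

From mathcomp Require Import all_boot all_order all_algebra.
From mathcomp Require Import complex.
From mathcomp Require Import all_classical all_reals all_analysis.
Set Implicit Arguments. Unset Strict Implicit. Unset Printing Implicit Defensive.
Import Order.TTheory GRing.Theory Num.Theory.
Local Open Scope ring_scope.
Local Open Scope complex_scope.

(* 2 cos(2 pi t), the trace of a boundary/puncture holonomy *)
Definition tr_of (R : realType) (t : R) : R := 2 * cos (2 * pi * t).

Definition M04_eq (R : realType) (rt : R) (xt yt zt : R[i]) : Prop :=
  let mu : R[i] := (tr_of rt)%:C in
  xt ^+ 2 + yt ^+ 2 + zt ^+ 2 + xt * yt * zt
  - 2 * mu ^+ 2 * (xt + yt + zt) + 4 * (mu ^+ 2 - 1) + mu ^+ 4 = 0.

Definition M11_eq (R : realType) (r : R) (x y z : R[i]) : Prop :=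
  x ^+ 2 + y ^+ 2 + z ^+ 2 - x * y * z - 2 - (tr_of r)%:C = 0.

From mathcomp Require Import all_boot all_order all_algebra.
From mathcomp Require Import complex.
From mathcomp Require Import all_classical all_reals all_analysis.
From mathcomp Require Import ring.
Set Implicit Arguments. Unset Strict Implicit. Unset Printing Implicit Defensive.
Import Order.TTheory GRing.Theory Num.Theory.
Local Open Scope ring_scope.
Local Open Scope complex_scope.

(* Since cos (2 pi r) = - cos (4 pi rt) = 1 - 2 cos (2 pi rt) ^ 2, writing
   xt = 2 - x ^ 2, yt = 2 - y ^ 2, zt = 2 - z ^ 2 turns the equation of
   M^{rt}_{0,4} into the product of the equations of M^r_{1,1} at (x, y, z)
   and at (-x, y, z).  Square roots of 2 - xt, 2 - yt, 2 - zt always exist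
   over C, and changing the sign of x if necessary lands on M^r_{1,1}; any
   other choice differs only by the signs of the square roots. *)

Lemma tr_of_double_sub_half (R : realType) (rt : R) :
  tr_of (2 * rt - 1 / 2) = 2 - tr_of rt ^+ 2.
Proof.
rewrite /tr_of.
have -> : 2 * pi * (2 * rt - 1 / 2) = (2 * pi * rt) *+ 2 - pi.
  by rewrite mulr2n; field.
by rewrite cosB cos_mulr2n sin_mulr2n cospi sinpi; ring.
Qed.

Lemma M04_eq_sub_sqr (R : realType) (rt : R) (x y z : R[i]) :
  M04_eq rt (2 - x ^+ 2) (2 - y ^+ 2) (2 - z ^+ 2) <->
  M11_eq (2 * rt - 1 / 2) x y z \/ M11_eq (2 * rt - 1 / 2) (- x) y z.
Proof.
rewrite /M04_eq /M11_eq tr_of_double_sub_half /=.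
set mu : R[i] := (tr_of rt)%:C.
have -> : (2 - tr_of rt ^+ 2)%:C = 2 - mu ^+ 2 :> R[i].
  by rewrite rmorphB rmorphXn /= rmorph_nat.
set m11 := fun x : R[i] => x ^+ 2 + y ^+ 2 + z ^+ 2 - x * y * z - 2 - (2 - mu ^+ 2).
rewrite -/(m11 x) -/(m11 (- x)).
have -> : (2 - x ^+ 2) ^+ 2 + (2 - y ^+ 2) ^+ 2 + (2 - z ^+ 2) ^+ 2
    + (2 - x ^+ 2) * (2 - y ^+ 2) * (2 - z ^+ 2)
    - 2 * mu ^+ 2 * (2 - x ^+ 2 + (2 - y ^+ 2) + (2 - z ^+ 2))
    + 4 * (mu ^+ 2 - 1) + mu ^+ 4 = m11 x * m11 (- x).
  by rewrite /m11; ring.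
split=> [/eqP|[] ->]; rewrite ?mulr0 ?mul0r //.
by rewrite mulf_eq0 => /orP[] /eqP; [left | right].
Qed.

Lemma exists_sub_sqr (C : numClosedFieldType) (c t : C) :
  exists a : C, t = c - a ^+ 2.
Proof. by exists (sqrtC (c - t)); rewrite sqrtCK opprB addrC subrK. Qed.

Lemma sub_sqr_sign (F : idomainType) (c a b : F) :
  c - a ^+ 2 = c - b ^+ 2 -> exists e : F, e ^+ 2 = 1 /\ b = e * a.
Proof.
move=> /addrI/oppr_inj/eqP; rewrite eqf_sqr => /orP[] /eqP ->.
  by exists 1; rewrite expr1n mul1r.
by exists (-1); rewrite sqrrN expr1n mulN1r opprK.
Qed.

Theorem proposition3p10 (R : realType) (rt : R) (xt yt zt : R[i]) :
  1 / 4 < rt -> rt < 1 / 2 ->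
  M04_eq rt xt yt zt ->
  (xt - 2) * (yt - 2) * (zt - 2) != 0 ->
  let r := 2 * rt - 1 / 2 in
  exists x y z : R[i],
    [/\ M11_eq r x y z, xt = 2 - x ^+ 2, yt = 2 - y ^+ 2 & zt = 2 - z ^+ 2] /\
    (forall x' y' z' : R[i],
        M11_eq r x' y' z' -> xt = 2 - x' ^+ 2 -> yt = 2 - y' ^+ 2 ->
        zt = 2 - z' ^+ 2 ->
        exists e1 e2 e3 : R[i],
          [/\ e1 ^+ 2 = 1, e2 ^+ 2 = 1, e3 ^+ 2 = 1 &
              [/\ x' = e1 * x, y' = e2 * y & z' = e3 * z]]).
Proof.
move=> _ _ + _ r.
have [x0 ->] := exists_sub_sqr (2 : R[i]) xt.
have [y ->] := exists_sub_sqr (2 : R[i]) yt.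
have [z ->] := exists_sub_sqr (2 : R[i]) zt.
move=> /M04_eq_sub_sqr M11_pm.
have [x M11x <-] : exists2 x, M11_eq r x y z & x ^+ 2 = x0 ^+ 2.
  by case: M11_pm; [exists x0 | exists (- x0); rewrite ?sqrrN].
exists x, y, z; split=> // x' y' z' _.
move=> /sub_sqr_sign[e1 [e1_sign ->]] /sub_sqr_sign[e2 [e2_sign ->]].
move=> /sub_sqr_sign[e3 [e3_sign ->]].
by exists e1, e2, e3.
Qed.
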